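(* (Soundness.) If $t\in\mathtt T_J$ is typable in $\cap J$, i.e. $\Gamma\vdash t:\sigma$ is derivable for some environment $\Gamma$ and type $\sigma$, then $t\in SN_{d\beta}$.
   Context: Terms $\mathtt T_J$: $t,u,r ::= x \mid \lambda x.t \mid t(u,y.r)$ ($y$ bound in $r$), up to $\alpha$-equivalence; $\{u/x\}t$ capture-avoiding substitution. List contexts $\mathtt D ::= \Diamond \mid t(u,y.\mathtt D)$. Distant beta: $\mathtt D\langle\lambda x.t\rangle(u,y.r) \mapsto_{d\beta} \{\{u/x\}\mathtt D\langle t\rangle/y\}r$ (variables bound by $\mathtt D$ not free in $u$, $x$ not in $\mathtt D$), $\to_{d\beta}$ its closure under all contexts; $SN_{d\beta}$ the set of terms with no infinite $\to_{d\beta}$-sequence. System $\cap J$: types $\sigma,\tau ::= \alpha \mid \mathcal M\to\sigma$, $\mathcal M=[\sigma_i]_{i\in I}$ a finite possibly empty multiset; $\sqcup$ multiset union; environments map variables to multisets, $\wedge$ pointwise union, $\Gamma;x:\mathcal M$ extension with $x\notin\mathrm{dom}\,\Gamma$. $\mathrm{ch}(\mathcal M)=\mathcal M$ if $\mathcal M\ne[\,]$, $\mathrm{ch}([\,])=[\tau]$ for an arbitrary $\tau$. Rules: (var) $x:[\sigma]\vdash x:\sigma$; (abs) from $\Gamma;x:\mathcal M\vdash t:\sigma$ infer $\Gamma\vdash\lambda x.t:\mathcal M\to\sigma$; (many) from $(\Gamma_i\vdash t:\sigma_i)_{i\in I}$, $I\ne\emptyset$, infer $\wedge_i\Gamma_i\vdash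 t:[\sigma_i]_{i\in I}$; (app) from $\Gamma\vdash t:\mathrm{ch}([\mathcal M_i\to\tau_i]_{i\in I})$, $\Delta\vdash u:\mathrm{ch}(\sqcup_i\mathcal M_i)$, $\Lambda;y:[\tau_i]_{i\in I}\vdash r:\sigma$ infer $\Gamma\wedge\Delta\wedge\Lambda\vdash t(u,y.r):\sigma$. *)

From Stdlib Require Import List Arith Permutation.
Import ListNotations.

(* t, u, r ::= x | \x.t | t(u, y.r)   ; in [App t u r], index 0 of r is y *)
Inductive term : Type :=
| Var : nat -> term
| Lam : term -> term
| App : term -> term -> term -> term.

Fixpoint shift (d c : nat) (t : term) : term :=
  match t with
  | Var n => if n <? c then Var n else Var (n + d)
  | Lam t => Lam (shift d (S c) t)
  | App t u r => App (shift d c t) (shift d c u) (shift d (S c) r)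
  end.

Fixpoint subst (k : nat) (s : term) (t : term) : term :=
  match t with
  | Var n => if n =? k then shift k 0 s
             else if k <? n then Var (n - 1) else Var n
  | Lam t => Lam (subst (S k) s t)
  | App t u r => App (subst k s t) (subst k s u) (subst (S k) s r)
  end.

Definition subst0 (s t : term) : term := subst 0 s t.

(* list contexts  D ::= <> | t(u, y.D) ; a layer (a,b) stands for a(b, y. _) *)
Definition lctx := list (term * term).

Fixpoint plug (D : lctx) (t : term) : term :=
  match D with
  | [] => t
  | (a, b) :: D' => App a b (plug D' t)
  end.

(* distant beta:  D<\x.t>(u, y.r) |-> {{u/x} D<t> / y} r.
   The body t lives under the |D| binders of D and the binder x (index 0);
   u is shifted past the binders of D (no capture). *)
Inductive dbeta_root : term -> term -> Prop :=
| root_dbeta (D : lctx) (t u r : term) :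
    dbeta_root (App (plug D (Lam t)) u r)
               (subst0 (plug D (subst0 (shift (length D) 0 u) t)) r).

Inductive dbeta : term -> term -> Prop :=
| db_root t t' : dbeta_root t t' -> dbeta t t'
| db_lam t t' : dbeta t t' -> dbeta (Lam t) (Lam t')
| db_app1 t t' u r : dbeta t t' -> dbeta (App t u r) (App t' u r)
| db_app2 t u u' r : dbeta u u' -> dbeta (App t u r) (App t u' r)
| db_app3 t u r r' : dbeta r r' -> dbeta (App t u r) (App t u r').

Definition SN_dbeta (t : term) : Prop :=
  ~ exists f : nat -> term, f 0 = t /\ forall n, dbeta (f n) (f (S n)).

(* Types  sigma ::= alpha | M -> sigma, with M a finite multiset of types.
   Multisets are represented by lists, taken up to (deep) permutation: teq / meq. *)
Inductive ty : Type :=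
| TVar : nat -> ty
| Arr : list ty -> ty -> ty.

Inductive teq : ty -> ty -> Prop :=
| teq_var a : teq (TVar a) (TVar a)
| teq_arr M N s s' :
    (exists P, Permutation M P /\ Forall2 teq P N) -> teq s s' -> teq (Arr M s) (Arr N s').

Definition meq (M N : list ty) : Prop :=
  exists P, Permutation M P /\ Forall2 teq P N.

Definition env := nat -> list ty.

Definition envEq (G G' : env) : Prop := forall n, meq (G n) (G' n).

Definition env_union (G G' : env) : env := fun n => G n ++ G' n.

(* G ; x : M  -- x is the newly bound variable (index 0), G the outer environment *)
Definition env_ext (M : list ty) (G : env) : env :=
  fun n => match n with 0 => M | S m => G m end.

Definition env_single (x : nat) (s : ty) : env :=
  fun n => if n =? x then [s] else [].

(* A represents ch(M):  ch(M) = M if M <> [], ch([]) = [tau] for an arbitrary tau *)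
Definition ch_rel (M A : list ty) : Prop :=
  (M <> [] /\ meq A M) \/ (M = [] /\ exists tau, A = [tau]).

(* Typing of cap-J.  Conclusions are taken up to equality of environments/types as
   multisets (envEq/teq); many-judgments  G |- t : [s_i]_{i in I}, I nonempty. *)
Inductive typ : env -> term -> ty -> Prop :=
| typ_var G x s :
    envEq G (env_single x s) -> typ G (Var x) s
| typ_abs G G' t M s s' :
    typ (env_ext M G) t s -> envEq G' G -> teq s' (Arr M s) ->
    typ G' (Lam t) s'
| typ_app G L Ga De La t u r A B s s' :
    (* L = [(M_i, tau_i)]_{i in I} *)
    ch_rel (map (fun p => Arr (fst p) (snd p)) L) A ->
    many Ga t A ->
    ch_rel (concat (map fst L)) B ->
    many De u B ->
    typ (env_ext (map snd L) La) r s ->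
    envEq G (env_union Ga (env_union De La)) ->
    teq s' s ->
    typ G (App t u r) s'
  with many : env -> term -> list ty -> Prop :=
| many_one G t s : typ G t s -> many G t [s]
| many_cons G1 G2 t s M :
    typ G1 t s -> many G2 t M -> many (env_union G1 G2) t (s :: M).

From Stdlib Require Import List Arith Permutation Lia Morphisms.
Import ListNotations.

(* Quantitative subject reduction.  Index cap-J derivations by their size.  Because
   multisets are non-idempotent, each occurrence of a variable is typed by its own
   derivation of the substituted term, so substitution costs at most the sum of the
   two sizes; a distant beta step removes the application node and the abstraction
   nodes it fires, hence strictly decreases the size. *)

(** * Equality of types and multisets *)

Definition ty_nested_ind (P : ty -> Prop)
  (HV : forall a, P (TVar a))
  (HA : forall M s, Forall P M -> P s -> P (Arr M s)) : forall a, P a :=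
  fix F a := match a with
  | TVar a => HV a
  | Arr M s => HA M s
      ((fix FM M := match M return Forall P M with
        | [] => Forall_nil P
        | x :: M => Forall_cons x (F x) (FM M)
        end) M) (F s)
  end.

Lemma Forall2_sym_of {A} (R : A -> A -> Prop) l m :
  Forall (fun x => forall y, R x y -> R y x) l -> Forall2 R l m -> Forall2 R m l.
Proof. intros Hsym HR; induction HR; inversion Hsym; constructor; auto. Qed.

Lemma Forall2_trans_of {A} (R : A -> A -> Prop) l m o :
  Forall (fun x => forall y z, R x y -> R y z -> R x z) l ->
  Forall2 R l m -> Forall2 R m o -> Forall2 R l o.
Proof.
  intros Htr HR; revert o; induction HR; intros o HR'; inversion HR'; subst;
    inversion Htr; constructor; eauto.
Qed.

Lemma meq_sym_of M N :
  Forall (fun x => forall y, teq x y -> teq y x) M -> meq M N -> meq N M.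
Proof.
  intros Hsym [P [HMP HPN]].
  destruct (Permutation_Forall2 (Permutation_sym HMP) HPN) as [Q [HNQ HMQ]].
  exists Q; split; [exact HNQ|]. exact (Forall2_sym_of _ _ _ Hsym HMQ).
Qed.

Lemma meq_trans_of M N O :
  Forall (fun x => forall y z, teq x y -> teq y z -> teq x z) M ->
  meq M N -> meq N O -> meq M O.
Proof.
  intros Htr [P [HMP HPN]] [Q [HNQ HQO]].
  destruct (Permutation_Forall2 HNQ (Forall2_flip HPN)) as [P' [HPP' HQP']].
  exists P'; split; [exact (perm_trans HMP HPP')|].
  apply Forall2_trans_of with Q; [|exact (Forall2_flip HQP')|exact HQO].
  exact (Permutation_Forall (perm_trans HMP HPP') Htr).
Qed.

Lemma teq_refl a : teq a a.
Proof.
  induction a as [x|M s IHM IHs] using ty_nested_ind; constructor; [|exact IHs].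
  exists M; split; [reflexivity|]. induction IHM; constructor; assumption.
Qed.

Lemma teq_sym a b : teq a b -> teq b a.
Proof.
  revert b; induction a as [x|M s IHM IHs] using ty_nested_ind; intros b Hab;
    inversion Hab as [|? N ? s' HMN Hss']; subst; constructor; auto.
  exact (meq_sym_of _ _ IHM HMN).
Qed.

Lemma teq_trans a b c : teq a b -> teq b c -> teq a c.
Proof.
  revert b c; induction a as [x|M s IHM IHs] using ty_nested_ind; intros b c Hab Hbc;
    inversion Hab as [|? N ? s' HMN Hss']; subst; [exact Hbc|].
  inversion Hbc as [|? O ? s'' HNO Hss'']; subst; constructor; eauto.
  exact (meq_trans_of _ _ _ IHM HMN HNO).
Qed.

#[export] Instance teq_Equivalence : Equivalence teq.
Proof. split; [exact teq_refl|exact teq_sym|exact teq_trans]. Qed.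

Lemma Forall2_teq_refl M : Forall2 teq M M.
Proof. induction M; constructor; [reflexivity|assumption]. Qed.

#[export] Instance meq_Equivalence : Equivalence meq.
Proof.
  split.
  - intro M; exists M; split; [reflexivity|apply Forall2_teq_refl].
  - intros M N; apply meq_sym_of, Forall_forall; intros; apply teq_sym; assumption.
  - intros M N O; apply meq_trans_of, Forall_forall; intros; eapply teq_trans; eassumption.
Qed.

Lemma Permutation_meq M N : Permutation M N -> meq M N.
Proof. intro HMN; exists N; split; [exact HMN|apply Forall2_teq_refl]. Qed.

#[export] Instance app_meq_Proper : Proper (meq ==> meq ==> meq) (@app ty).
Proof.
  intros M M' [P [HP HF]] N N' [Q [HQ HG]]; exists (P ++ Q).
  split; [apply Permutation_app|apply Forall2_app]; assumption.
Qed.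

Lemma meq_nil M : meq [] M -> M = [].
Proof. intros [P [HP HF]]. apply Permutation_nil in HP; subst. inversion HF; reflexivity. Qed.

(** * Environments *)

Fixpoint ty_eq_dec (a b : ty) : {a = b} + {a <> b}.
Proof. decide equality; [apply Nat.eq_dec|apply (list_eq_dec ty_eq_dec)]. Defined.

Definition env_empty : env := fun _ => [].

(* The environments of [subst k u t] and [shift d c t]. *)
Definition env_drop (k : nat) (G : env) : env :=
  fun n => if n <? k then G n else G (S n).

Definition env_shift (d c : nat) (G : env) : env :=
  fun n => if n <? c then G n else if n <? c + d then [] else G (n - d).

#[export] Instance envEq_Equivalence : Equivalence envEq.
Proof.
  split.
  - intros G n; reflexivity.
  - intros G G' E n; symmetry; apply E.
  - intros G G' G'' E E' n; transitivity (G' n); [apply E|apply E'].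
Qed.

#[export] Instance env_union_Proper : Proper (envEq ==> envEq ==> envEq) env_union.
Proof. intros G G' E H H' E' n; unfold env_union; rewrite (E n), (E' n); reflexivity. Qed.

#[export] Instance env_drop_Proper k : Proper (envEq ==> envEq) (env_drop k).
Proof. intros G G' E n; unfold env_drop; destruct (n <? k); apply E. Qed.

#[export] Instance env_shift_Proper d c : Proper (envEq ==> envEq) (env_shift d c).
Proof.
  intros G G' E n; unfold env_shift.
  destruct (n <? c); [|destruct (n <? c + d)]; [apply E|reflexivity|apply E].
Qed.

Ltac env_perm :=
  let n := fresh "n" in let x := fresh "x" in
  intro n; unfold env_union, env_empty; apply Permutation_meq;
  apply (Permutation_count_occ ty_eq_dec); intro x;
  repeat rewrite count_occ_app; simpl; lia.

Ltac index_cases :=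
  repeat match goal with
  | |- context [?a <? ?b] => destruct (Nat.ltb_spec a b)
  | |- context [?a =? ?b] => destruct (Nat.eqb_spec a b)
  end.

Lemma env_union_empty_r G : envEq (env_union G env_empty) G.
Proof. intro n; unfold env_union, env_empty; rewrite app_nil_r; reflexivity. Qed.

Lemma env_union_ext M N G H :
  envEq (env_union (env_ext M G) (env_ext N H)) (env_ext (M ++ N) (env_union G H)).
Proof. intros [|n]; reflexivity. Qed.

Lemma env_shift_union d c G H :
  envEq (env_shift d c (env_union G H)) (env_union (env_shift d c G) (env_shift d c H)).
Proof. intro n; unfold env_shift, env_union; index_cases; reflexivity. Qed.

Lemma env_drop_union k G H :
  envEq (env_drop k (env_union G H)) (env_union (env_drop k G) (env_drop k H)).
Proof. intro n; unfold env_drop, env_union; index_cases; reflexivity. Qed.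

Lemma env_shift_empty d c : envEq (env_shift d c env_empty) env_empty.
Proof. intro n; unfold env_shift, env_empty; index_cases; reflexivity. Qed.

Lemma env_drop_empty k : envEq (env_drop k env_empty) env_empty.
Proof. intro n; unfold env_drop, env_empty; index_cases; reflexivity. Qed.

Lemma env_shift_ext d c M G :
  envEq (env_shift d (S c) (env_ext M G)) (env_ext M (env_shift d c G)).
Proof.
  intros [|n]; unfold env_shift; cbn [env_ext]; index_cases; try reflexivity; try lia.
  replace (S n - d) with (S (n - d)) by lia; reflexivity.
Qed.

Lemma env_shift_single d c x s :
  envEq (env_shift d c (env_single x s)) (env_single (if x <? c then x else x + d) s).
Proof. intro n; unfold env_shift, env_single; index_cases; try reflexivity; lia. Qed.

Lemma env_shift_0 H : envEq (env_shift 0 0 H) H.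
Proof. intro n; unfold env_shift; simpl; rewrite Nat.sub_0_r; reflexivity. Qed.

Lemma env_shift_S d H : envEq (env_shift (S d) 0 H) (env_ext [] (env_shift d 0 H)).
Proof.
  intros [|n]; unfold env_shift; cbn [env_ext]; index_cases; try reflexivity; lia.
Qed.

Lemma env_shift_ext_nil d H : envEq (env_shift d 0 (env_ext [] H)) (env_shift (S d) 0 H).
Proof.
  intro n; unfold env_shift; index_cases; try reflexivity; try lia.
  - replace (n - d) with 0 by lia; reflexivity.
  - replace (n - d) with (S (n - S d)) by lia; reflexivity.
Qed.

Lemma env_drop_ext k M G : envEq (env_drop (S k) (env_ext M G)) (env_ext M (env_drop k G)).
Proof. intros [|n]; unfold env_drop; cbn [env_ext]; index_cases; try reflexivity; lia. Qed.

Lemma env_drop_0_ext M G : envEq (env_drop 0 (env_ext M G)) G.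
Proof. reflexivity. Qed.

Lemma env_drop_single k s : envEq (env_drop k (env_single k s)) env_empty.
Proof. intro n; unfold env_drop, env_single, env_empty; index_cases; try reflexivity; lia. Qed.

Lemma env_drop_single_neq k x s : x <> k ->
  envEq (env_drop k (env_single x s)) (env_single (if k <? x then x - 1 else x) s).
Proof. intros Hx n; unfold env_drop, env_single; index_cases; try reflexivity; lia. Qed.

Lemma env_single_teq x s s' : teq s s' -> envEq (env_single x s) (env_single x s').
Proof.
  intros E n; unfold env_single; destruct (n =? x); [|reflexivity].
  exists [s]; repeat constructor; assumption.
Qed.

(** * Sized typing *)

Definition arr_list (L : list (list ty * ty)) : list ty :=
  map (fun p => Arr (fst p) (snd p)) L.

(* Weakening absorbs the environment of an
   argument erased by dbeta; the size makes subject reduction strictly decreasing. *)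
Inductive styp : nat -> env -> term -> ty -> Prop :=
| styp_var G J x s : envEq G (env_union (env_single x s) J) -> styp 1 G (Var x) s
| styp_abs n G G' t M s s' :
    styp n (env_ext M G) t s -> envEq G' G -> teq s' (Arr M s) -> styp (S n) G' (Lam t) s'
| styp_app n1 n2 n3 G L Ga De La t u r A B s s' :
    ch_rel (arr_list L) A -> smany n1 Ga t A ->
    ch_rel (concat (map fst L)) B -> smany n2 De u B ->
    styp n3 (env_ext (map snd L) La) r s ->
    envEq G (env_union Ga (env_union De La)) -> teq s' s ->
    styp (S (n1 + n2 + n3)) G (App t u r) s'
with smany : nat -> env -> term -> list ty -> Prop :=
| smany_nil G t : envEq G env_empty -> smany 0 G t []
| smany_cons n m G1 G2 G t s M :
    styp n G1 t s -> smany m G2 t M -> envEq G (env_union G1 G2) -> smany (n + m) G t (s :: M).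

Scheme styp_mut := Induction for styp Sort Prop
  with smany_mut := Induction for smany Sort Prop.
Combined Scheme styp_smany_mut from styp_mut, smany_mut.

Lemma styp_envEq n G G' t s : styp n G t s -> envEq G G' -> styp n G' t s.
Proof.
  intros HT E; destruct HT.
  - eapply styp_var; rewrite <- E; eassumption.
  - eapply styp_abs; [eassumption|rewrite <- E; assumption|assumption].
  - eapply styp_app; try eassumption. rewrite <- E; assumption.
Qed.

Lemma smany_envEq n G G' t A : smany n G t A -> envEq G G' -> smany n G' t A.
Proof.
  intros HM E; destruct HM.
  - apply smany_nil; rewrite <- E; assumption.
  - eapply smany_cons; try eassumption. rewrite <- E; assumption.
Qed.

#[export] Instance styp_Proper : Proper (eq ==> envEq ==> eq ==> eq ==> iff) styp.
Proof.
  intros n ? <- G G' E t ? <- s ? <-.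
  split; intro; eapply styp_envEq; eauto; symmetry; assumption.
Qed.

Lemma styp_teq n G t s s' : styp n G t s -> teq s s' -> styp n G t s'.
Proof.
  intros HT E; destruct HT.
  - apply styp_var with J; rewrite H, (env_single_teq x s s' E); reflexivity.
  - eapply styp_abs; [eassumption|assumption|rewrite <- E; assumption].
  - eapply styp_app; try eassumption. rewrite <- E; assumption.
Qed.

Lemma smany_Permutation A A' : Permutation A A' -> forall n G t, smany n G t A -> smany n G t A'.
Proof.
  induction 1 as [|s A A' _ IH|s s' A|A A' A'' _ IH _ IH']; intros n G t HM; auto.
  - inversion HM; subst; eapply smany_cons; eauto.
  - inversion HM as [|n1 m G1 G2 ? ? ? ? HT HM' E]; subst.
    inversion HM' as [|n2 m' G3 G4 ? ? ? ? HT' HM'' E']; subst.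
    replace (n1 + (n2 + m')) with (n2 + (n1 + m')) by lia.
    eapply smany_cons; [eassumption|eapply smany_cons; [eassumption|eassumption|reflexivity]|].
    rewrite E, E'; env_perm.
Qed.

Lemma smany_Forall2_teq A A' : Forall2 teq A A' -> forall n G t, smany n G t A -> smany n G t A'.
Proof.
  induction 1; intros n G t HM; [assumption|].
  inversion HM; subst; eapply smany_cons; eauto using styp_teq.
Qed.

Lemma smany_meq n G t A A' : smany n G t A -> meq A A' -> smany n G t A'.
Proof.
  intros HM [P [HP HF]]; eapply smany_Forall2_teq, smany_Permutation; eassumption.
Qed.

#[export] Instance smany_Proper : Proper (eq ==> envEq ==> eq ==> meq ==> iff) smany.
Proof.
  intros n ? <- G G' E t ? <- A A' EA.
  split; intro; (eapply smany_meq; [eapply smany_envEq|]); eauto; symmetry; assumption.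
Qed.

Lemma smany_nil_inv n G t : smany n G t [] -> n = 0 /\ envEq G env_empty.
Proof. intro HM; inversion HM; subst; auto. Qed.

Lemma smany_app_inv A1 A2 n G t : smany n G t (A1 ++ A2) ->
  exists n1 n2 G1 G2, n = n1 + n2 /\ envEq G (env_union G1 G2) /\
    smany n1 G1 t A1 /\ smany n2 G2 t A2.
Proof.
  revert n G; induction A1 as [|s A1 IH]; intros n G HM; simpl in HM.
  - exists 0, n, env_empty, G; repeat split; [reflexivity|apply smany_nil; reflexivity|exact HM].
  - inversion HM as [|k m G1 G2 ? ? ? ? HT HM' E]; subst.
    destruct (IH _ _ HM') as (m1 & m2 & H1 & H2 & -> & E' & HM1 & HM2).
    exists (k + m1), m2, (env_union G1 H1), H2; split; [lia|split; [|split]].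
    + rewrite E, E'; env_perm.
    + eapply smany_cons; [exact HT|exact HM1|reflexivity].
    + exact HM2.
Qed.

Lemma styp_weaken n G t s H : styp n G t s -> styp n (env_union G H) t s.
Proof.
  intros HT; revert H.
  induction HT as [G J x s E|n G G' t M s s' HT IH E Hs
                  |n1 n2 n3 G L Ga De La t u r A B s s' HA HMa HB HMb HT IH E Hs]; intro K.
  - apply styp_var with (J := env_union J K). rewrite E; env_perm.
  - eapply styp_abs; [|rewrite E; reflexivity|exact Hs].
    rewrite <- (app_nil_r M), <- env_union_ext. apply IH.
  - apply (styp_app _ _ _ _ L Ga De (env_union La K) _ _ _ A B s); try assumption.
    + rewrite <- (app_nil_r (map snd L)), <- env_union_ext. apply IH.
    + rewrite E; env_perm.
Qed.

Lemma styp_smany_shift :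
  (forall n G t s, styp n G t s -> forall d c, styp n (env_shift d c G) (shift d c t) s) /\
  (forall n G t A, smany n G t A -> forall d c, smany n (env_shift d c G) (shift d c t) A).
Proof.
  apply styp_smany_mut; intros; simpl.
  - rewrite e, env_shift_union, env_shift_single.
    destruct (x <? c); eapply styp_var; reflexivity.
  - eapply styp_abs; [|rewrite e; reflexivity|eassumption].
    rewrite <- env_shift_ext; auto.
  - eapply styp_app; eauto; [rewrite <- env_shift_ext; auto|].
    rewrite e, !env_shift_union; reflexivity.
  - apply smany_nil; rewrite e; apply env_shift_empty.
  - eapply smany_cons; eauto. rewrite e, env_shift_union; reflexivity.
Qed.

(** * Substitution and subject reduction *)

Lemma styp_subst_var G J x s k u m H :
  envEq G (env_union (env_single x s) J) -> smany m H u (G k) ->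
  exists n', n' <= 1 + m /\
    styp n' (env_union (env_drop k G) (env_shift k 0 H)) (subst k u (Var x)) s.
Proof.
  intros E HM; simpl.
  destruct (Nat.eqb_spec x k) as [->|Hne].
  - rewrite (E k) in HM; unfold env_union, env_single in HM; rewrite Nat.eqb_refl in HM.
    inversion HM as [|m1 m2 H1 H2 ? ? ? ? HT HM2 EH]; subst.
    exists m1; split; [lia|].
    pose proof (proj1 styp_smany_shift _ _ _ _ HT k 0) as HT'.
    apply styp_weaken with (H := env_union (env_drop k J) (env_shift k 0 H2)) in HT'.
    rewrite E, env_drop_union, EH, env_drop_single, env_shift_union.
    eapply styp_envEq; [exact HT'|env_perm].
  - exists 1; split; [lia|].
    rewrite E, env_drop_union, (env_drop_single_neq _ _ _ Hne).
    destruct (k <? x);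
      apply styp_var with (J := env_union (env_drop k J) (env_shift k 0 H)); env_perm.
Qed.

Lemma styp_smany_subst :
  (forall n G t s, styp n G t s -> forall k u m H, smany m H u (G k) ->
     exists n', n' <= n + m /\
       styp n' (env_union (env_drop k G) (env_shift k 0 H)) (subst k u t) s) /\
  (forall n G t A, smany n G t A -> forall k u m H, smany m H u (G k) ->
     exists n', n' <= n + m /\
       smany n' (env_union (env_drop k G) (env_shift k 0 H)) (subst k u t) A).
Proof.
  apply styp_smany_mut.
  - intros; eapply styp_subst_var; eassumption.
  - intros n G G' t M s s' _ IH E Hs k u m H HM; simpl.
    rewrite (E k) in HM.
    destruct (IH (S k) u m H HM) as (n' & Hn' & HT').
    exists (S n'); split; [lia|].
    rewrite env_drop_ext, env_shift_S, env_union_ext, app_nil_r in HT'.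
    eapply styp_abs; [exact HT'|rewrite E; reflexivity|exact Hs].
  - intros n1 n2 n3 G L Ga De La t u r A B s s' HA _ IHa HB _ IHb _ IHr E Hs k v m H HM; simpl.
    rewrite (E k) in HM; unfold env_union at 1 2 in HM.
    apply smany_app_inv in HM as (m1 & m23 & H1 & H23 & -> & EH & HM1 & HM23).
    apply smany_app_inv in HM23 as (m2 & m3 & H2 & H3 & -> & EH' & HM2 & HM3).
    destruct (IHa k v m1 H1 HM1) as (n1' & Hn1 & HMa').
    destruct (IHb k v m2 H2 HM2) as (n2' & Hn2 & HMb').
    destruct (IHr (S k) v m3 H3 HM3) as (n3' & Hn3 & HTr').
    exists (S (n1' + n2' + n3')); split; [lia|].
    rewrite env_drop_ext, env_shift_S, env_union_ext, app_nil_r in HTr'.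
    eapply styp_app; [exact HA|exact HMa'|exact HB|exact HMb'|exact HTr'| |exact Hs].
    rewrite E, EH, EH', !env_drop_union, !env_shift_union; env_perm.
  - intros G t E k u m H HM.
    rewrite (E k) in HM; apply smany_nil_inv in HM as [-> EH].
    exists 0; split; [lia|].
    apply smany_nil; rewrite E, EH, env_drop_empty, env_shift_empty; reflexivity.
  - intros n m0 G1 G2 G t s M _ IHt _ IHM E k u m H HM.
    rewrite (E k) in HM; unfold env_union at 1 in HM.
    apply smany_app_inv in HM as (m1 & m2 & H1 & H2 & -> & EH & HM1 & HM2).
    destruct (IHt k u m1 H1 HM1) as (n' & Hn & HT').
    destruct (IHM k u m2 H2 HM2) as (n'' & Hn' & HM').
    exists (n' + n''); split; [lia|].
    eapply smany_cons; [exact HT'|exact HM'|].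
    rewrite E, EH, env_drop_union, env_shift_union; env_perm.
Qed.

Lemma styp_subst0 n M G t s m H u :
  styp n (env_ext M G) t s -> smany m H u M ->
  exists n', n' <= n + m /\ styp n' (env_union G H) (subst0 u t) s.
Proof.
  intros HT HM.
  destruct (proj1 styp_smany_subst _ _ _ _ HT 0 u m H HM) as (n' & Hn' & HT').
  exists n'; split; [exact Hn'|]. rewrite env_drop_0_ext, env_shift_0 in HT'; exact HT'.
Qed.

(* The hole of a list context has the type of the whole term; a new filler may use an
   extra environment [H], seen from the hole past the binders of [D]. *)
Lemma styp_plug D : forall n G v s, styp n G (plug D v) s ->
  exists G0 n0, n0 <= n /\ styp n0 G0 v s /\
    forall v' s' H m, styp m (env_union G0 (env_shift (length D) 0 H)) v' s' ->
      styp (n - n0 + m) (env_union G H) (plug D v') s'.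
Proof.
  induction D as [|[a b] D IH]; intros n G v s HT; simpl in *.
  - exists G, n; split; [lia|split; [exact HT|]].
    intros v' s' H m HT'; rewrite env_shift_0 in HT'.
    replace (n - n + m) with m by lia; exact HT'.
  - inversion HT as [| |n1 n2 n3 ? L Ga De La ? ? ? A B s1 ? HA HMa HB HMb HTr E Hs]; subst.
    destruct (IH _ _ _ _ HTr) as (G0 & n0 & Hn0 & HT0 & Hplug).
    exists G0, n0; split; [lia|split; [apply styp_teq with s1; [exact HT0|symmetry; exact Hs]|]].
    intros v' s'' H m HT'; rewrite <- env_shift_ext_nil in HT'.
    apply Hplug in HT'; rewrite env_union_ext, app_nil_r in HT'.
    replace (S (n1 + n2 + n3) - n0 + m) with (S (n1 + n2 + (n3 - n0 + m))) by lia.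
    eapply styp_app; [exact HA|exact HMa|exact HB|exact HMb|exact HT'| |reflexivity].
    rewrite E; env_perm.
Qed.

(* The derivation of [u] for the union of the [M_i] is split among the arrows
   [M_i -> tau_i] that the abstraction is used at. *)
Lemma smany_plug_beta D t u : forall L n1 Ga n2 De,
  smany n1 Ga (plug D (Lam t)) (arr_list L) -> smany n2 De u (concat (map fst L)) ->
  exists m, m <= n1 + n2 /\
    smany m (env_union Ga De) (plug D (subst0 (shift (length D) 0 u) t)) (map snd L).
Proof.
  induction L as [|[M tau] L IH]; intros n1 Ga n2 De HMa HMb; simpl in *.
  - apply smany_nil_inv in HMa as [-> Ea]; apply smany_nil_inv in HMb as [-> Eb].
    exists 0; split; [lia|]. apply smany_nil; rewrite Ea, Eb; reflexivity.
  - inversion HMa as [|k ka Ga1 Ga2 ? ? ? ? HT HMa' Ea]; subst.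
    apply smany_app_inv in HMb as (d1 & d2 & De1 & De2 & -> & Eb & HMd1 & HMd2).
    destruct (styp_plug _ _ _ _ _ HT) as (G0 & n0 & Hn0 & HT0 & Hplug).
    inversion HT0 as [|n0' G1 ? ? M' sg ? HTt E1 Hs1|]; subst.
    inversion Hs1 as [|? ? ? ? HMM' Hsg]; subst; change (meq M M') in HMM'.
    pose proof (proj2 styp_smany_shift _ _ _ _ HMd1 (length D) 0) as HMu.
    rewrite HMM' in HMu.
    destruct (styp_subst0 _ _ _ _ _ _ _ _ HTt HMu) as (n'' & Hn'' & HTs).
    rewrite <- E1 in HTs; apply styp_teq with (s' := tau), Hplug in HTs; [|symmetry; exact Hsg].
    destruct (IH _ _ _ _ HMa' HMd2) as (m' & Hm' & HMr).
    exists (k - S n0' + n'' + m'); split; [lia|].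
    eapply smany_cons; [exact HTs|exact HMr|]. rewrite Ea, Eb; env_perm.
Qed.

(* For [ch([]) = [tau]] the derivation is discarded and its environment [J] is left
   to weakening. *)
Lemma smany_ch X A n G t : ch_rel X A -> smany n G t A ->
  exists n' G' J, n' <= n /\ envEq G (env_union G' J) /\ smany n' G' t X.
Proof.
  intros [[_ HAX]|[-> _]] HM.
  - exists n, G, env_empty; split; [lia|split; [symmetry; apply env_union_empty_r|]].
    rewrite <- HAX; exact HM.
  - exists 0, env_empty, G; split; [lia|split; [reflexivity|apply smany_nil; reflexivity]].
Qed.

Definition size_decreasing (t t' : term) : Prop :=
  forall n G s, styp n G t s -> exists n', n' < n /\ styp n' G t' s.

Lemma styp_dbeta_root t t' : dbeta_root t t' -> size_decreasing t t'.
Proof.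
  intros [D t0 u r] n G s HT.
  inversion HT as [| |n1 n2 n3 ? L Ga De La ? ? ? A B s1 ? HA HMa HB HMb HTr E Hs]; subst.
  destruct (smany_ch _ _ _ _ _ HA HMa) as (n1' & Ga' & Ja & Hn1 & EGa & HMa').
  destruct (smany_ch _ _ _ _ _ HB HMb) as (n2' & De' & Jb & Hn2 & EDe & HMb').
  destruct (smany_plug_beta _ _ _ _ _ _ _ _ HMa' HMb') as (m & Hm & HMx).
  destruct (styp_subst0 _ _ _ _ _ _ _ _ HTr HMx) as (n' & Hn' & HT').
  exists n'; split; [lia|]. (* strict: the application node is gone *)
  apply styp_weaken with (H := env_union Ja Jb), styp_teq with (s' := s) in HT';
    [|symmetry; exact Hs].
  rewrite E, EGa, EDe; eapply styp_envEq; [exact HT'|env_perm].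
Qed.

Lemma smany_dbeta_le t t' : size_decreasing t t' ->
  forall n G A, smany n G t A -> exists n', n' + length A <= n /\ smany n' G t' A.
Proof.
  intros Hred n G A HM; induction HM as [G t E|k m G1 G2 G t s M HT HM IH E].
  - exists 0; split; [simpl; lia|apply smany_nil; exact E].
  - destruct (Hred _ _ _ HT) as (k' & Hk & HT').
    destruct (IH Hred) as (m' & Hm & HM').
    exists (k' + m'); split; [simpl; lia|eapply smany_cons; eassumption].
Qed.

Lemma smany_dbeta t t' X n G A : size_decreasing t t' ->
  ch_rel X A -> smany n G t A -> exists n', n' < n /\ smany n' G t' A.
Proof.
  intros Hred HA HM.
  destruct (smany_dbeta_le _ _ Hred _ _ _ HM) as (n' & Hn & HM').
  exists n'; split; [|exact HM'].
  destruct HA as [[HX HAX]|[_ [tau ->]]]; [|simpl in Hn; lia].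
  destruct A; [|simpl in Hn; lia].
  apply meq_nil in HAX; contradiction.
Qed.

Lemma styp_dbeta t t' : dbeta t t' -> size_decreasing t t'.
Proof.
  induction 1 as [t t' Hr|t t' _ IH|t t' u r _ IH|t u u' r _ IH|t u r r' _ IH];
    intros n G s HT.
  - exact (styp_dbeta_root _ _ Hr _ _ _ HT).
  - inversion HT as [|n0 G0 ? ? M s0 ? HT0 E Hs|]; subst.
    destruct (IH _ _ _ HT0) as (n' & Hn & HT').
    exists (S n'); split; [lia|eapply styp_abs; eassumption].
  - inversion HT as [| |n1 n2 n3 ? L Ga De La ? ? ? A B s1 ? HA HMa HB HMb HTr E Hs]; subst.
    destruct (smany_dbeta _ _ _ _ _ _ IH HA HMa) as (n' & Hn & HM').
    exists (S (n' + n2 + n3)); split; [lia|eapply styp_app; eassumption].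
  - inversion HT as [| |n1 n2 n3 ? L Ga De La ? ? ? A B s1 ? HA HMa HB HMb HTr E Hs]; subst.
    destruct (smany_dbeta _ _ _ _ _ _ IH HB HMb) as (n' & Hn & HM').
    exists (S (n1 + n' + n3)); split; [lia|eapply styp_app; eassumption].
  - inversion HT as [| |n1 n2 n3 ? L Ga De La ? ? ? A B s1 ? HA HMa HB HMb HTr E Hs]; subst.
    destruct (IH _ _ _ HTr) as (n' & Hn & HT').
    exists (S (n1 + n2 + n')); split; [lia|eapply styp_app; eassumption].
Qed.

Scheme typ_mut := Induction for typ Sort Prop
  with many_mut := Induction for many Sort Prop.
Combined Scheme typ_many_mut from typ_mut, many_mut.

Lemma typ_many_styp :
  (forall G t s, typ G t s -> exists n, styp n G t s) /\
  (forall G t A, many G t A -> exists n, smany n G t A).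
Proof.
  apply typ_many_mut.
  - intros G x s E; exists 1; apply styp_var with env_empty.
    rewrite env_union_empty_r; exact E.
  - intros G G' t M s s' _ [n HT] E Hs; exists (S n); eapply styp_abs; eassumption.
  - intros G L Ga De La t u r A B s s' HA _ [n1 H1] HB _ [n2 H2] _ [n3 H3] E Hs.
    exists (S (n1 + n2 + n3)); eapply styp_app; eassumption.
  - intros G t s _ [n HT]; exists (n + 0).
    eapply smany_cons; [exact HT|apply smany_nil; reflexivity|symmetry; apply env_union_empty_r].
  - intros G1 G2 t s M _ [n HT] _ [m HM]; exists (n + m).
    eapply smany_cons; [exact HT|exact HM|reflexivity].
Qed.

Lemma styp_SN n G t s : styp n G t s -> SN_dbeta t.
Proof.
  revert G t s; induction n as [n IH] using (well_founded_induction lt_wf).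
  intros G t s HT [f [H0 Hf]]; subst t.
  destruct (styp_dbeta _ _ (Hf 0) _ _ _ HT) as (n' & Hn & HT').
  apply (IH n' Hn _ _ _ HT'); exists (fun k => f (S k)); split; [reflexivity|intro k; apply Hf].
Qed.

Theorem mainTheorem10 :
  forall (t : term), (exists (G : env) (s : ty), typ G t s) -> SN_dbeta t.
Proof.
  intros t (G & s & HT).
  destruct (proj1 typ_many_styp _ _ _ HT) as [n HTn].
  exact (styp_SN _ _ _ _ HTn).
Qed.
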